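(* Let $n\ge5$, $m\in\mathbb N$, $p\in(0,1)$. Then $$\|\varrho_1\ast_1^0\varrho_1\|_2^2=\mathbb P\big(K_{1,4}\subseteq\overline{\mathcal G(n,m,p)}\big)=\big(1-p+p(1-p)^4\big)^m,$$ $$\|\varrho_2\ast_1^1\varrho_2\|_2^2=\big((1-p)^4+4p(1-p)^3+2p^2(1-p)^2\big)^m,$$ $$\|\varrho_2\ast_1^1\varrho_1\|_2^2=\big((1-p)^5+5p(1-p)^4+6p^2(1-p)^3+p^3(1-p)^2\big)^m,$$ $$\|\varrho_1\|_2^2=\big(1-2p^2+p^3\big)^m,$$ where $K_{1,4}$ is a star with four leaves on five fixed vertices of $\mathcal G(n,m,p)$ and $\overline{\mathcal G(n,m,p)}$ is the complement graph.
   Context: Random intersection graph $\mathcal G(n,m,p)$: vertices $v_1,\ldots,v_n$, attributes $a_1,\ldots,a_m$; each vertex chooses each attribute independently with probability $p$; two vertices are adjacent iff they chose a common attribute. $\mu_{m,p}(x)=p^{|x|}(1-p)^{m-|x|}$ on $\{0,1\}^m$. $g(x,y)=1$ if $x_i=y_i=1$ for some $i$, else $0$; $\varrho=\varrho_2=1-g$ and $\varrho_1(x)=\int\varrho(x,y)\,d\mu_{m,p}(y)$. Norms are $L^2$ with respect to products of $\mu_{m,p}$. Contraction: for $f$ on $(\{0,1\}^m)^k$, $h$ on $(\{0,1\}^m)^l$, $0\le a\le b\le k\wedge l$: $f\ast_b^ah(x_1,..,x_{b-a},y_1,..,y_{k-b},z_1,..,z_{l-b})=\int_{(\{0,1\}^m)^a}f(w,x,y)h(w,x,z)\,d\mu_{m,p}^{\otimes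 a}(w)$. *)

(* all integrals are finite sums over {0,1}^m. *)
From mathcomp Require Import all_boot all_order all_algebra.
Set Implicit Arguments. Unset Strict Implicit. Unset Printing Implicit Defensive.
Import Order.TTheory GRing.Theory Num.Theory.
Local Open Scope ring_scope.

(* {0,1}^m : x i = true means attribute a_i is chosen *)
Definition cube (m : nat) := {ffun 'I_m -> bool}.
Definition cube0 (m : nat) : cube m := [ffun _ => false].

Definition wt (m : nat) (x : cube m) : nat := #|[pred i | x i]|.

Definition mu {R : nzRingType} (m : nat) (p : R) (x : cube m) : R :=
  p ^+ wt x * (1 - p) ^+ (m - wt x).

Definition g (m : nat) (x y : cube m) : bool := [exists i, x i && y i].

Definition rho2 {R : nzRingType} (m : nat) (x y : cube m) : R :=
  if g x y then 0 else 1.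

Definition rho1 {R : nzRingType} (m : nat) (p : R) (x : cube m) : R :=
  \sum_(y : cube m) rho2 x y * mu p y.

(* functions of several variables in {0,1}^m are represented as functions
   on sequences of arguments *)
Definition rho2s {R : nzRingType} (m : nat) (s : seq (cube m)) : R :=
  rho2 (nth (cube0 m) s 0) (nth (cube0 m) s 1).
Definition rho1s {R : nzRingType} (m : nat) (p : R) (s : seq (cube m)) : R :=
  rho1 p (nth (cube0 m) s 0).

(* contraction f *_b^a h for f of arity k, h of arity l, 0 <= a <= b <= min k l;
   the argument s = (x_1..x_{b-a}, y_1..y_{k-b}, z_1..z_{l-b}) *)
Definition contr {R : nzRingType} (m : nat) (p : R) (k l a b : nat)
  (f h : seq (cube m) -> R) : seq (cube m) -> R :=
  fun s =>
    let x := take (b - a) s in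
    let y := take (k - b) (drop (b - a) s) in
    let z := drop ((b - a) + (k - b)) s in
    \sum_(w : a.-tuple (cube m))
      (\prod_(u <- w) mu p u) * f (w ++ x ++ y) * h (w ++ x ++ z).

Definition norm2sq {R : nzRingType} (m : nat) (p : R) (r : nat)
  (F : seq (cube m) -> R) : R :=
  \sum_(s : r.-tuple (cube m)) (\prod_(u <- s) mu p u) * F s ^+ 2.

(* Random intersection graph G(n,m,p): the attribute sets of v_1..v_n are
   X : {ffun 'I_n -> cube m}, with law the product of mu_{m,p}. *)
Definition rig_prob {R : nzRingType} (n m : nat) (p : R)
  (E : {ffun 'I_n -> cube m} -> bool) : R :=
  \sum_(X : {ffun 'I_n -> cube m}) (\prod_(i : 'I_n) mu p (X i)) * (E X)%:R.

Definition compl_adj (n m : nat) (X : {ffun 'I_n -> cube m}) (i j : 'I_n) : bool :=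
  (i != j) && ~~ g (X i) (X j).

(* K_{1,4} on the fixed vertices v_1 (centre) and v_2..v_5 (leaves),
   i.e. indices 0 (centre) and 1..4, is contained in the complement *)
Definition star14_in_compl (n m : nat) (X : {ffun 'I_n -> cube m}) : bool :=
  [forall c : 'I_n, forall j : 'I_n,
     ((nat_of_ord c == 0%N) && (1 <= j <= 4)%N) ==> compl_adj X c j].

(** Every quantity in the statement is a sum over attribute sets of products
    over the [m] attributes of factors that involve only that attribute, so it
    factorizes as the [m]-th power of a sum over one attribute, which is a
    polynomial in [p].  For the star, the four leaves are independent given
    the centre's attribute set [c], and each avoids [c] with probability
    [rho1 p c]; hence the star probability is the fourth moment of [rho1],
    which is also the squared norm of [rho1 *_1^0 rho1 = rho1 ^ 2]. *)

From mathcomp Require Import all_boot all_order all_algebra.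
From mathcomp Require Import ring.
Import Order.TTheory GRing.Theory Num.Theory.
Local Open Scope ring_scope.

Section TupleSums.
Context {R : nmodType} {T : finType}.

Lemma sum_tuple0 (F : 0.-tuple T -> R) : \sum_(s : 0.-tuple T) F s = F [tuple].
Proof. by rewrite (big_pred1 [tuple]) // => t; apply/esym/eqP/tuple0. Qed.

Lemma sum_tupleS n (F : n.+1.-tuple T -> R) :
  \sum_(s : n.+1.-tuple T) F s = \sum_(x : T) \sum_(t : n.-tuple T) F (cons_tuple x t).
Proof.
rewrite pair_big /= (reindex (fun q : T * n.-tuple T => cons_tuple q.1 q.2)) /=.
  by apply: eq_bigr => -[x t].
apply: onW_bij; exists (fun s : n.+1.-tuple T => (thead s, behead_tuple s)).
  by move=> [x t]; congr pair; apply: val_inj.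
by move=> s; apply: val_inj; case: s => -[|x l].
Qed.

Lemma sum_tuple1 (F : 1.-tuple T -> R) :
  \sum_(s : 1.-tuple T) F s = \sum_(x : T) F [tuple x].
Proof.
rewrite sum_tupleS; apply: eq_bigr => x _.
by rewrite sum_tuple0; congr F; apply: val_inj.
Qed.

End TupleSums.

Section Factorization.
Context {R : comNzRingType} {m : nat}.

Lemma sum_cube_prod (F : 'I_m -> bool -> R) :
  \sum_(x : cube m) \prod_(i < m) F i (x i) = \prod_(i < m) \sum_(b : bool) F i b.
Proof. by rewrite bigA_distr_bigA. Qed.

Lemma sum_cube_prod_const (F : bool -> R) :
  \sum_(x : cube m) \prod_(i < m) F (x i) = (\sum_(b : bool) F b) ^+ m.
Proof. by rewrite (sum_cube_prod (fun _ => F)) prodr_const card_ord. Qed.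

Lemma sum_cube2_prod_const (F : bool -> bool -> R) :
  \sum_(x : cube m) \sum_(y : cube m) \prod_(i < m) F (x i) (y i)
  = (\sum_(a : bool) \sum_(b : bool) F a b) ^+ m.
Proof.
rewrite -sum_cube_prod_const; apply: eq_bigr => x _.
exact: (sum_cube_prod (fun i => F (x i))).
Qed.

End Factorization.

Section Coordinates.
Context {R : comNzRingType} {m : nat} (p : R).

Definition mu_coord (b : bool) : R := if b then p else 1 - p.
Definition rho2_coord (a b : bool) : R := if a && b then 0 else 1.
Definition rho1_coord (b : bool) : R := if b then 1 - p else 1.

Lemma mu_prod (x : cube m) : mu p x = \prod_(i < m) mu_coord (x i).
Proof.
rewrite /mu /wt [RHS](bigID (fun i => x i)) /=.
rewrite (eq_bigr (fun _ => p)) => [|i -> //].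
rewrite [X in _ = _ * X](eq_bigr (fun _ => 1 - p)) => [|i /negbTE -> //].
rewrite !prodr_const; congr (_ * _ ^+ _).
have := cardC [pred i | x i]; rewrite card_ord => card_m.
by rewrite -{1}card_m addKn; apply: eq_card => i; rewrite !inE.
Qed.

Lemma rho2_prod (x y : cube m) : rho2 x y = \prod_(i < m) rho2_coord (x i) (y i).
Proof.
rewrite /rho2 /g /rho2_coord; case: existsP => [[i xyi]|no_i].
  by rewrite (bigD1 i) //= xyi mul0r.
by rewrite big1 // => i _; case: ifP => // xyi; case: no_i; exists i.
Qed.

Lemma rho1_prod (x : cube m) : rho1 p x = \prod_(i < m) rho1_coord (x i).
Proof.
rewrite /rho1 (eq_bigr (fun y : cube m =>
  \prod_(i < m) (rho2_coord (x i) (y i) * mu_coord (y i)))); last first.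
  by move=> y _; rewrite rho2_prod mu_prod big_split.
rewrite (sum_cube_prod (fun i b => rho2_coord (x i) b * mu_coord b)).
apply: eq_bigr => i _.
by rewrite big_bool /rho2_coord /mu_coord /rho1_coord; case: (x i) => /=; ring.
Qed.

Lemma sum_mu : \sum_(x : cube m) mu p x = 1.
Proof.
rewrite (eq_bigr _ (fun x _ => mu_prod x)) sum_cube_prod_const big_bool.
by rewrite /mu_coord /= addrC subrK expr1n.
Qed.

Lemma moment_rho1 k :
  \sum_(x : cube m) mu p x * rho1 p x ^+ k = (1 - p + p * (1 - p) ^+ k) ^+ m.
Proof.
rewrite (eq_bigr (fun x : cube m =>
  \prod_(i < m) (mu_coord (x i) * rho1_coord (x i) ^+ k))).
  rewrite (sum_cube_prod_const (fun b => mu_coord b * rho1_coord b ^+ k)).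
  by rewrite big_bool /= expr1n mulr1 addrC.
by move=> x _; rewrite mu_prod rho1_prod -prodrXl -big_split.
Qed.

End Coordinates.

Section Norms.
Variables (R : comNzRingType) (m : nat) (p : R).

Lemma norm2sq1 (F : seq (cube m) -> R) :
  norm2sq p 1 F = \sum_(x : cube m) mu p x * F [:: x] ^+ 2.
Proof. by rewrite /norm2sq sum_tuple1; apply: eq_bigr => x _; rewrite big_seq1. Qed.

Lemma norm2sq2 (F : seq (cube m) -> R) :
  norm2sq p 2 F = \sum_(x : cube m) \sum_(y : cube m) mu p x * mu p y * F [:: x; y] ^+ 2.
Proof.
rewrite /norm2sq sum_tupleS; apply: eq_bigr => x _; rewrite sum_tuple1.
by apply: eq_bigr => y _; rewrite /= !big_cons big_nil mulr1 mulrA.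
Qed.

Lemma contr0E k l b (f h : seq (cube m) -> R) s :
  contr p k l 0 b f h s =
  f (take b s ++ take (k - b) (drop b s)) * h (take b s ++ drop (b + (k - b)) s).
Proof. by rewrite /contr sum_tuple0 big_nil mul1r subn0. Qed.

Lemma contr1E k l b (f h : seq (cube m) -> R) s :
  contr p k l 1 b f h s =
  \sum_(w : cube m) mu p w * f (w :: take (b - 1) s ++ take (k - b) (drop (b - 1) s))
                           * h (w :: take (b - 1) s ++ drop (b - 1 + (k - b)) s).
Proof. by rewrite /contr sum_tuple1; apply: eq_bigr => w _; rewrite big_seq1. Qed.

Lemma norm_rho1 : norm2sq p 1 (@rho1s R m p) = (1 - 2%:R * p ^+ 2 + p ^+ 3) ^+ m.
Proof. by rewrite norm2sq1 moment_rho1; congr (_ ^+ _); ring. Qed.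

Lemma norm_contr_rho1_rho1 :
  norm2sq p 1 (contr p 1 1 0 1 (@rho1s R m p) (rho1s p))
  = \sum_(x : cube m) mu p x * rho1 p x ^+ 4.
Proof.
rewrite norm2sq1; apply: eq_bigr => x _.
by rewrite contr0E -expr2 -exprM.
Qed.

Lemma norm_contr_rho2_rho2 :
  norm2sq p 2 (contr p 2 2 1 1 (@rho2s R m) (@rho2s R m))
  = ((1 - p) ^+ 4 + 4%:R * p * (1 - p) ^+ 3 + 2%:R * p ^+ 2 * (1 - p) ^+ 2) ^+ m.
Proof.
pose c a b := \sum_(w : bool) mu_coord p w * rho2_coord w a * rho2_coord w b.
have contrE x y :
    contr p 2 2 1 1 (@rho2s R m) (@rho2s R m) [:: x; y] = \prod_(i < m) c (x i) (y i).
  rewrite contr1E -(sum_cube_prod (fun i w =>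
    mu_coord p w * rho2_coord w (x i) * rho2_coord w (y i))).
  by apply: eq_bigr => w _; rewrite /rho2s /= mu_prod !rho2_prod -!big_split.
rewrite norm2sq2 (eq_bigr (fun x : cube m => \sum_(y : cube m)
  \prod_(i < m) (mu_coord p (x i) * mu_coord p (y i) * c (x i) (y i) ^+ 2))).
  rewrite (sum_cube2_prod_const (fun a b => mu_coord p a * mu_coord p b * c a b ^+ 2)).
  by rewrite /c !big_bool /mu_coord /rho2_coord /=; congr (_ ^+ _); ring.
move=> x _; apply: eq_bigr => y _.
by rewrite contrE !mu_prod -prodrXl -!big_split.
Qed.

Lemma norm_contr_rho2_rho1 :
  norm2sq p 1 (contr p 2 1 1 1 (@rho2s R m) (rho1s p))
  = ((1 - p) ^+ 5 + 5%:R * p * (1 - p) ^+ 4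
     + 6%:R * p ^+ 2 * (1 - p) ^+ 3 + p ^+ 3 * (1 - p) ^+ 2) ^+ m.
Proof.
pose d a := \sum_(w : bool) mu_coord p w * rho2_coord w a * rho1_coord p w.
have contrE x : contr p 2 1 1 1 (@rho2s R m) (rho1s p) [:: x] = \prod_(i < m) d (x i).
  rewrite contr1E -(sum_cube_prod (fun i w =>
    mu_coord p w * rho2_coord w (x i) * rho1_coord p w)).
  apply: eq_bigr => w _.
  by rewrite /rho2s /rho1s /= mu_prod rho2_prod rho1_prod -!big_split.
rewrite norm2sq1 (eq_bigr (fun x : cube m =>
  \prod_(i < m) (mu_coord p (x i) * d (x i) ^+ 2))).
  rewrite (sum_cube_prod_const (fun a => mu_coord p a * d a ^+ 2)).
  by rewrite /d !big_bool /mu_coord /rho2_coord /rho1_coord /=; congr (_ ^+ _); ring.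
by move=> x _; rewrite contrE mu_prod -prodrXl -big_split.
Qed.

End Norms.

Lemma natr_forall_in (R : comPzSemiRingType) (I : finType) (P B : pred I) :
  [forall (i | P i), B i]%:R = \prod_(i | P i) (B i)%:R :> R.
Proof.
case: (boolP [forall (i | P i), B i]) => [/forall_inP allB | /forall_inPn [i Pi notBi]].
  by rewrite big1 // => i /allB ->.
by rewrite (bigD1 i) //= (negbTE notBi) mul0r.
Qed.

Lemma rho2E (R : nzRingType) m (x y : cube m) : rho2 x y = (~~ g x y)%:R :> R.
Proof. by rewrite /rho2; case: g. Qed.

Section Star.
Variables (R : comNzRingType) (m n : nat) (p : R) (c0 : 'I_n) (A : pred 'I_n).
Hypothesis c0_notin_A : ~~ A c0.

Lemma sum_star_rho2 :
  \sum_(X : {ffun 'I_n -> cube m})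
     (\prod_(i < n) mu p (X i)) * \prod_(j < n | A j) rho2 (X c0) (X j)
  = \sum_(c : cube m) mu p c * rho1 p c ^+ #|A|.
Proof.
(* Summing over a copy [c] of the centre's set, pinned by [X c0 == c],
   turns the summand into a product of functions of the single [X i]. *)
pose G (c : cube m) (i : 'I_n) (v : cube m) :=
  mu p v * (if i == c0 then (v == c)%:R else if A i then rho2 c v else 1).
have deltaE (X : {ffun 'I_n -> cube m}) :
    (\prod_(i < n) mu p (X i)) * \prod_(j < n | A j) rho2 (X c0) (X j)
    = \sum_(c : cube m) \prod_(i < n) G c i (X i).
  rewrite (bigD1 (X c0)) //= [X in _ + X]big1 ?addr0; last first.
    by move=> c ncX; rewrite (bigD1 c0) //= /G eqxx eq_sym (negbTE ncX) mulr0 mul0r.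
  rewrite [X in _ * X]big_mkcond -big_split; apply: eq_bigr => i _ /=.
  by rewrite /G; case: eqP => [->|_]; rewrite ?eqxx ?(negbTE c0_notin_A).
have sumG c : \prod_(i < n) \sum_(v : cube m) G c i v = mu p c * rho1 p c ^+ #|A|.
  rewrite (bigD1 c0) //=; congr (_ * _).
    rewrite /G eqxx (bigD1 c) //= eqxx mulr1n mulr1 big1 ?addr0 // => v /negbTE ->.
    by rewrite mulr0n mulr0.
  rewrite -prodr_const [RHS]big_mkcond [RHS](bigD1 c0) //=.
  rewrite unfold_in (negbTE c0_notin_A) mul1r.
  apply: eq_bigr => i nc0; rewrite /G (negbTE nc0) unfold_in; case: ifP => _.
    by apply: eq_bigr => v _; rewrite mulrC.
  by rewrite -[RHS](@sum_mu _ m p); apply: eq_bigr => v _; rewrite mulr1.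
rewrite (eq_bigr _ (fun X _ => deltaE X)) exchange_big /=.
by apply: eq_bigr => c _; rewrite -sumG bigA_distr_bigA.
Qed.

End Star.

Section Star14.
Context {n : nat}.
Hypothesis n_ge5 : (5 <= n)%N.

Let centre : 'I_n := Ordinal (leq_trans (isT : (0 < 5)%N) n_ge5).
Let leaf : pred 'I_n := [pred j : 'I_n | (1 <= j <= 4)%N].

Lemma card_leaf : #|leaf| = 4%N.
Proof.
rewrite -sum1_card (eq_bigl (fun j : 'I_n => (1 <= j <= 4)%N && (j < 5)%N)) => [|j].
  rewrite -(big_ord_widen_cond _ (fun j => (1 <= j <= 4)%N) (fun=> 1%N) n_ge5).
  by rewrite big_mkcond !big_ord_recr big_ord0.
by rewrite ltnS -andbA andbb.
Qed.

Lemma star14_in_complE m (X : {ffun 'I_n -> cube m}) :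
  star14_in_compl X = [forall (j | leaf j), ~~ g (X centre) (X j)].
Proof.
apply/idP/forall_inP => [star j leaf_j | no_g].
  move/forallP: star => /(_ centre) /forallP /(_ j) /implyP.
  by move=> /(_ leaf_j) /andP[].
apply/forallP => c; apply/forallP => j; apply/implyP => /andP[/eqP c_0 leaf_j].
have -> : c = centre by apply: val_inj.
rewrite /compl_adj no_g // andbT -(inj_eq val_inj) /= eq_sym -lt0n.
by case/andP: leaf_j.
Qed.

Lemma rig_prob_star14 {R : comNzRingType} m (p : R) :
  rig_prob p (@star14_in_compl n m) = \sum_(c : cube m) mu p c * rho1 p c ^+ 4.
Proof.
rewrite /rig_prob -card_leaf -(@sum_star_rho2 _ _ _ p centre leaf) //.
apply: eq_bigr => X _; rewrite star14_in_complE natr_forall_in.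
by congr (_ * _); apply: eq_bigr => j _; rewrite rho2E.
Qed.

End Star14.

Theorem lemma7p3 (R : realFieldType) (n m : nat) (p : R) :
  (5 <= n)%N -> 0 < p -> p < 1 ->
  [/\ @norm2sq R m p 1
        (@contr R m p 1 1 0 1 (@rho1s R m p) (@rho1s R m p))
        = @rig_prob R n m p (@star14_in_compl n m),
      @rig_prob R n m p (@star14_in_compl n m)
        = (1 - p + p * (1 - p) ^+ 4) ^+ m,
      @norm2sq R m p 2
        (@contr R m p 2 2 1 1 (@rho2s R m) (@rho2s R m))
        = ((1 - p) ^+ 4 + 4%:R * p * (1 - p) ^+ 3
           + 2%:R * p ^+ 2 * (1 - p) ^+ 2) ^+ m,
      @norm2sq R m p 1
        (@contr R m p 2 1 1 1 (@rho2s R m) (@rho1s R m p))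
        = ((1 - p) ^+ 5 + 5%:R * p * (1 - p) ^+ 4
           + 6%:R * p ^+ 2 * (1 - p) ^+ 3 + p ^+ 3 * (1 - p) ^+ 2) ^+ m
    & @norm2sq R m p 1 (@rho1s R m p) = (1 - 2%:R * p ^+ 2 + p ^+ 3) ^+ m].
Proof.
(* All identities are polynomial in [p]. *)
move=> n_ge5 _ _; have star := rig_prob_star14 n_ge5 m p.
split.
- by rewrite norm_contr_rho1_rho1 star.
- by rewrite star moment_rho1.
- exact: norm_contr_rho2_rho2.
- exact: norm_contr_rho2_rho1.
- exact: norm_rho1.
Qed.
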